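(* Let $p>q\ge1$ be coprime integers such that $\frac pq=[a_1,\dots,a_h]$ with $a_1,\dots,a_h\ge5$. Then $\mathbf Z_{p,q}=\{(1,2,\dots,2,1)\}$.
   Context: $[c_1,\dots,c_k]=c_1-\cfrac{1}{c_2-\cfrac{1}{\ddots-\cfrac1{c_k}}}$. A $k$-tuple of non-negative integers $(n_1,\dots,n_k)$ is admissible if $[n_j,\dots,n_k]>0$ for $j=2,\dots,k$ (all denominators in the continued fraction are positive). Write $\frac{p}{p-q}=[b_1,\dots,b_k]$ with all $b_i\ge2$ (uniquely). $\mathbf Z_{p,q}\subset\mathbb Z^k$ is the set of admissible $k$-tuples of non-negative integers $(n_1,\dots,n_k)$ with $[n_1,\dots,n_k]=0$ and $0\le n_i\le b_i$ for $i=1,\dots,k$. The tuple $(1,2,\dots,2,1)$ has length $k$. *)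

From mathcomp Require Import all_boot all_order all_algebra.
Set Implicit Arguments. Unset Strict Implicit. Unset Printing Implicit Defensive.
Import Order.TTheory GRing.Theory Num.Theory.
Local Open Scope ring_scope.

(* Hirzebruch-Jung continued fraction
   [c_1, ..., c_k] = c_1 - 1/(c_2 - 1/( ... - 1/c_k)),
   for a nonempty list of naturals, computed in rat.
   (The empty list is given the value 0; it is never used in the statement.) *)
Fixpoint hjcf (s : seq nat) : rat :=
  match s with
  | [::] => 0
  | [:: c] => c%:R
  | c :: s' => c%:R - (hjcf s')^-1
  end.

(* (n_1,...,n_k) is admissible: [n_j,...,n_k] > 0 for j = 2,...,k.
   [n_j,...,n_k] is hjcf (drop j.-1 n). *)
Definition admissible (n : seq nat) : Prop :=
  forall j : nat, (2 <= j <= size n)%N -> 0 < hjcf (drop j.-1 n).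

(* Z_{p,q} relative to the expansion p/(p-q) = [b_1,...,b_k]:
   admissible k-tuples of nonnegative integers with [n_1,...,n_k] = 0
   and 0 <= n_i <= b_i. *)
Definition Zset (b : seq nat) (n : seq nat) : Prop :=
  [/\ size n = size b, admissible n, hjcf n = 0 &
      forall i : nat, (i < size b)%N -> (nth 0%N n i <= nth 0%N b i)%N].

Definition one_twos_one (k : nat) : seq nat := 1%N :: rcons (nseq (k - 2) 2%N) 1%N.

(* Riemenschneider duality turns the expansion p/q = [a_1,...,a_h] into
   p/(p-q) = [b] with b = (2^(a_1-2), 3, 2^(a_2-3), 3, ..., 3, 2^(a_h-2)); since
   every a_i >= 5, b starts with three 2s and every 3 is followed by at least two
   2s and at least three entries.  For n in Z_{p,q}, a backward induction shows
   that every tail [n_j,...,n_k] (j >= 2) is either 1, and then the tail is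
   (2,...,2,1), or lies in an explicit union of intervals depending only on how
   many 2s of b precede the next 3.  Two 2s before the next 3 keep the tail value
   away from 1/2 and 1, so n_1 - 1/[n_2,...,n_k] = 0 with n_1 <= b_1 = 2 forces
   n_1 = 1 and (n_2,...,n_k) = (2,...,2,1). *)

From mathcomp Require Import all_boot all_order all_algebra.
From mathcomp Require Import ring lra.
Import Order.TTheory GRing.Theory Num.Theory.
Set Implicit Arguments. Unset Strict Implicit.
Local Open Scope ring_scope.

Ltac neq0_lra := repeat (apply/andP; split); apply/eqP; lra.

Ltac destruct_or_and := repeat match goal with
  | H : _ \/ _ |- _ => destruct H
  | H : _ /\ _ |- _ => destruct H end.

Ltac pick_interval := first [split; nra | left; split; nra | right; pick_interval].

Lemma hjcf_cons (c : nat) (s : seq nat) :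
  s != [::] -> hjcf (c :: s) = c%:R - (hjcf s)^-1.
Proof. by case: s. Qed.

Definition twos_one (t : nat) : seq nat := rcons (nseq t 2%N) 1%N.

Lemma size_twos_one t : size (twos_one t) = t.+1.
Proof. by rewrite size_rcons size_nseq. Qed.

Lemma twos_one_neq0 t : twos_one t != [::].
Proof. by case: t. Qed.

Lemma hjcf_twos_one t : hjcf (twos_one t) = 1.
Proof.
elim: t => [//|t IH]; rewrite [twos_one _]/= hjcf_cons ?twos_one_neq0 // IH invr1.
by rewrite -[2%:R]/(1 + 1 : rat) addrK.
Qed.

Lemma drop_twos_one i t : (i <= t)%N -> drop i (twos_one t) = twos_one (t - i).
Proof. by move=> hi; rewrite /twos_one drop_rcons ?size_nseq // drop_nseq. Qed.

Section HJExpansion.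

Variable s : seq nat.
Hypothesis s_ge2 : all (fun x => 2 <= x)%N s.
Hypothesis s_neq0 : s != [::].

Lemma hjcf_gt1 : 1 < hjcf s.
Proof.
elim: s s_ge2 s_neq0 => [//|x [|y s'] IH] /andP[hx hs'] _.
  by rewrite /= (ltr_nat _ 1).
rewrite hjcf_cons //; have h1 := IH hs' isT.
have h2x : (2 : rat) <= x%:R by rewrite (ler_nat _ 2).
have : (hjcf (y :: s'))^-1 < 1 by rewrite invf_lt1 //; lra.
lra.
Qed.

Lemma hjcf_cons_bounds x : x%:R - 1 < hjcf (x :: s) < x%:R.
Proof.
rewrite hjcf_cons //; have h1 := hjcf_gt1.
have : 0 < (hjcf s)^-1 < 1 by rewrite invr_gt0 invf_lt1 //; lra.
by case/andP=> *; apply/andP; split; lra.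
Qed.

End HJExpansion.

Lemma natr_eq_of_bounds (x y : nat) (v : rat) :
  x%:R - 1 < v <= x%:R -> y%:R - 1 < v <= y%:R -> x = y.
Proof.
move=> /andP[hx1 hx2] /andP[hy1 hy2].
have /[!ltr_nat] hxy : (x%:R : rat) < y.+1%:R by rewrite -addn1 natrD; lra.
have /[!ltr_nat] hyx : (y%:R : rat) < x.+1%:R by rewrite -addn1 natrD; lra.
by apply/eqP; rewrite eqn_leq -ltnS hxy /= -ltnS hyx.
Qed.

Lemma hjcf_cons_le x s : all (fun x => 2 <= x)%N s -> x%:R - 1 < hjcf (x :: s) <= x%:R.
Proof.
case: s => [_|y s hs]; first by rewrite /= lexx andbT; lra.
by case/andP: (hjcf_cons_bounds hs isT x) => *; apply/andP; split; lra.
Qed.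

Lemma hjcf_inj s s' : s != [::] -> s' != [::] ->
  all (fun x => 2 <= x)%N s -> all (fun x => 2 <= x)%N s' ->
  hjcf s = hjcf s' -> s = s'.
Proof.
elim: s s' => [//|x s IH] [//|x' s'] _ _ /andP[hx hs] /andP[hx' hs'] e.
have exx : x = x'.
  by apply: natr_eq_of_bounds (hjcf_cons_le x hs) _; rewrite e hjcf_cons_le.
subst x'; case: s s' IH hs hs' e => [|y s] [|y' s'] IH hs hs' e //.
- by move: (@hjcf_cons_bounds (y' :: s') hs' isT x); rewrite -e /= ltxx andbF.
- by move: (@hjcf_cons_bounds (y :: s) hs isT x); rewrite e /= ltxx andbF.
- congr (_ :: _); apply: IH => //; apply: invr_inj.
  move: e; rewrite (@hjcf_cons x (y :: s)) // (@hjcf_cons x (y' :: s')) //.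
  by move=> /addrI /oppr_inj.
Qed.

Definition incr (s : seq nat) : seq nat := if s is x :: s' then x.+1 :: s' else s.

Lemma hjcf_incr s : s != [::] -> hjcf (incr s) = hjcf s + 1.
Proof. by case: s => [//|x [|y s]] _; rewrite /= -addn1 natrD // addrAC. Qed.

Lemma hjcf_nseq2_cat m T (y : rat) : T != [::] -> 1 < y -> hjcf T = y / (y - 1) ->
  hjcf (nseq m 2%N ++ T) = (y + m%:R) / (y + m%:R - 1).
Proof.
move=> hT hy hTy; elim: m => [|m IH]; first by rewrite addr0.
rewrite [_ ++ _]/= hjcf_cons; last first.
  by rewrite -size_eq0 size_cat addn_eq0 !size_eq0 (negbTE hT) andbF.
have hm : (0 : rat) <= m%:R by rewrite ler0n.
by rewrite IH -addn1 natrD; field; neq0_lra.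
Qed.

(* Riemenschneider's dual expansion: [dual a] = x/(x-1) when [a] = x. *)
Fixpoint dual (a : seq nat) : seq nat :=
  if a is c :: a' then
    nseq (c - 2) 2%N ++ (if a' is [::] then [:: 2%N] else incr (dual a'))
  else [::].

Lemma hjcf_dual a : a != [::] -> all (fun x => 2 <= x)%N a ->
  dual a != [::] /\ hjcf (dual a) = hjcf a / (hjcf a - 1).
Proof.
elim: a => [//|c a IH] _ /andP[hc ha].
set T := if a is [::] then [:: 2%N] else incr (dual a).
have [y [hy hT hTy hay]] : exists y : rat,
    [/\ 1 < y, T != [::], hjcf T = y / (y - 1) & hjcf (c :: a) = y + (c - 2)%:R].
  case: a IH ha @T => [|c' a] IH ha.
    by exists 2; split => //=; rewrite natrB // addrC subrK.
  move=> T; rewrite {}/T; have [hD hDv] := IH isT ha.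
  have := @hjcf_gt1 (c' :: a) ha isT; set t := hjcf (c' :: a) in hDv * => ht.
  exists (2 - t^-1); split.
  - have : t^-1 < 1 by rewrite invf_lt1 //; lra.
    lra.
  - by case: (dual _) hD.
  - by rewrite hjcf_incr // hDv; field; neq0_lra.
  - rewrite hjcf_cons // natrB //; ring.
split; first by rewrite /= -size_eq0 size_cat addn_eq0 !size_eq0 (negbTE hT) andbF.
by rewrite [dual _]/= -/T (hjcf_nseq2_cat _ hT hy hTy) hay.
Qed.

Definition next_phase (k y : nat) : nat := if y == 3%N then 0%N else minn k.+1 2.

(* The position of the first 3 in c, capped at 2, where the last entry counts as
   a 3: a last entry 2 of a tail other than (2,...,2,1) behaves like 3 - 1/1. *)
Fixpoint phase (c : seq nat) : nat :=
  if c is y :: c' then (if c' is [::] then 0%N else next_phase (phase c') y) else 0%N.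

Fixpoint spaced_threes (c : seq nat) : bool :=
  if c is y :: c' then [&& y <= 3, (y == 3%N) ==> (phase c' == 2%N) & spaced_threes c']%N
  else true.

Lemma phase_cons y c : c != [::] -> phase (y :: c) = next_phase (phase c) y.
Proof. by case: c. Qed.

(* With f_x(s) = x - 1/s: the positive values of f_x (x <= 3) on region 2, and
   f_3(1) = 2, lie in region 0; the positive values of f_x (x <= 2) on region 0
   lie in region 1, and on regions 1 and 2 they lie in region 2. *)
Definition region (k : nat) (s : rat) : Prop :=
  match k with
  | 0%N => (2 <= s /\ s <= 7/3) \/ (1 < s /\ s <= 15/11) \/ (0 < s /\ s <= 1/3)
  | 1%N => (3/2 <= s /\ s <= 11/7) \/ (1/2 <= s /\ s <= 4/7) \/
           (1 < s /\ s <= 15/11) \/ (0 < s /\ s <= 1/3)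
  | _ => (1 < s /\ s <= 15/11) \/ (0 < s /\ s <= 4/11)
  end.

Lemma region_gt0 k s : region k s -> 0 < s.
Proof. by case: k => [|[|k]] /= h; destruct_or_and; lra. Qed.

Lemma region_step k y x s : (x <= y)%N -> (y <= 3)%N -> (y == 3%N) ==> (k == 2%N) ->
  region k s -> 0 < x%:R - s^-1 -> region (next_phase k y) (x%:R - s^-1).
Proof.
move=> hxy hy3 hk hs; have s0 := region_gt0 hs.
have u0 : 0 < s^-1 by rewrite invr_gt0.
have us : s^-1 * s = 1 by rewrite mulVf // gt_eqF.
move: (s^-1) u0 us => u u0 us.
case: y hxy hy3 hk => [|[|[|[|y]]]] //; case: x => [|[|[|[|x]]]] //;
  case: k hs => [|[|k]] //= hs _ _ _ hpos; rewrite /next_phase /minn /=;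
  destruct_or_and; first [exfalso; nra | pick_interval].
Qed.

Lemma twos_one_step k y x : (x <= y)%N -> (y <= 3)%N -> 0 < (x%:R : rat) - 1 ->
  x = 2%N \/ region (next_phase k y) (x%:R - 1).
Proof.
case: x => [|[|[|[|x]]]] hxy hy3 hpos; first [by exfalso; lra | by left | idtac].
  have -> : y = 3%N by apply/eqP; rewrite eqn_leq hy3.
  by right; left; lra.
by have := leq_trans hxy hy3.
Qed.

Lemma region2_sub_inv_neq0 x s : (x <= 2)%N -> region 2 s -> x%:R - s^-1 != 0.
Proof.
move=> hx hs; have s0 := region_gt0 hs.
have us : s^-1 * s = 1 by rewrite mulVf // gt_eqF.
apply/negP => /eqP /subr0_eq hxs; move: us; rewrite -hxs.
by case: x hx {hxs} => [|[|[|x]]] //= _; rewrite ?mul0r ?mul1r => us; case: hs; lra.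
Qed.

Lemma twos_one_or_region m c : m != [::] -> size m = size c ->
  (forall i, (i < size c)%N -> (nth 0%N m i <= nth 0%N c i)%N) -> spaced_threes c ->
  (forall i, (i < size m)%N -> 0 < hjcf (drop i m)) ->
  m = twos_one (size m).-1 \/ region (phase c) (hjcf m).
Proof.
elim: m c => [//|x m IH] [//|y c] _ [hsz] hle /and3P[hy3 hy hc] hpos.
have hxy : (x <= y)%N := hle 0%N isT.
have hx0 : 0 < hjcf (x :: m) := hpos 0%N isT.
case: m IH hsz hle hpos hx0 => [|z m] IH hsz hle hpos hx0.
  case: c hsz hy {hle IH hc hpos} => // _ hy.
  case: x hxy hx0 => [|[|[|x]]] hxy hx0; first [by rewrite ltxx in hx0 | by left | idtac].
    by right; left; lra.
  by case: y hy3 hy hxy => [|[|[|[|y]]]].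
have hc0 : c != [::] by case: c hsz {IH hle hc hy}.
rewrite hjcf_cons // phase_cons //.
have [htail | hreg] := IH c isT hsz (fun i => hle i.+1) hc (fun i => hpos i.+1).
  have hv : hjcf (z :: m) = 1 by rewrite htail hjcf_twos_one.
  have hx1 : 0 < (x%:R : rat) - 1 by move: hx0; rewrite hjcf_cons // hv invr1.
  rewrite hv invr1; have [hx2 | ] := twos_one_step (phase c) hxy hy3 hx1; last by right.
  by left; rewrite hx2 [in LHS]htail.
by right; apply: region_step.
Qed.

Lemma phase_twos c : c != [::] -> phase [:: 2, 2 & c]%N = 2%N.
Proof.
by move=> hc; rewrite !phase_cons // /next_phase /=; case: (phase c) => [|[|k]].
Qed.

Lemma spaced_threes_nseq2_cat m c : spaced_threes (nseq m 2%N ++ c) = spaced_threes c.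
Proof. by elim: m. Qed.

Lemma all_dual_ge2 a : all (fun x => 2 <= x)%N (dual a).
Proof.
elim: a => [//|c a IH] /=; rewrite all_cat all_nseq orbT /=.
case: a IH => [//|c' a]; case: (dual (c' :: a)) => //= x s /andP[hx ->].
by rewrite andbT leqW.
Qed.

Lemma dual_shape a : a != [::] -> all (fun x => 5 <= x)%N a ->
  exists r, [/\ dual a = [:: 2, 2, 2 & r]%N, r != [::] & spaced_threes r].
Proof.
elim: a => [//|c a IH] _ /andP[hc ha].
case: c hc => [|[|[|[|[|c]]]]] // _.
case: a IH ha => [|c' a] IH ha.
  exists (nseq c 2%N ++ [:: 2%N]).
  by rewrite spaced_threes_nseq2_cat; split => //; case: c.
have [r [hD hr hsp]] := IH isT ha.
exists (nseq c 2%N ++ [:: 3, 2, 2 & r]%N); split.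
- by rewrite -[dual _]/(nseq c.+3 2 ++ incr (dual (c' :: a)))%N hD.
- by case: c.
- by move: (phase_twos hr); rewrite spaced_threes_nseq2_cat /= => ->.
Qed.

Lemma admissible_cons x m :
  admissible (x :: m) <-> forall i, (i < size m)%N -> 0 < hjcf (drop i m).
Proof.
split=> h; first by move=> i; apply: (h i.+2).
by case=> [|[|j]] // /andP[_ hj]; apply: h.
Qed.

Lemma one_twos_one_in_Zset b : (2 <= size b)%N -> all (fun x => 2 <= x)%N b ->
  Zset b (one_twos_one (size b)).
Proof.
move=> hk hb; rewrite /one_twos_one -[rcons _ _]/(twos_one (size b - 2)).
have htwos : all (fun x => x <= 2)%N (1%N :: twos_one (size b - 2)).
  by rewrite /= all_rcons all_nseq orbT.
split.
- by rewrite /= size_twos_one -addn2 subnK.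
- apply/admissible_cons => i; rewrite size_twos_one ltnS => hi.
  by rewrite drop_twos_one // hjcf_twos_one.
- by rewrite hjcf_cons ?twos_one_neq0 // hjcf_twos_one invr1 subrr.
- move=> i hi; apply: leq_trans (allP hb _ (mem_nth 0%N hi)).
  case: (ltnP i (size (1%N :: twos_one (size b - 2)))) => hi'.
    exact: (allP htwos) _ (mem_nth 0%N hi').
  by rewrite nth_default.
Qed.

Lemma Zset_eq_one_twos_one c n : phase c = 2%N -> spaced_threes c ->
  Zset (2%N :: c) n -> n = one_twos_one (size c).+1.
Proof.
move=> hph hsp [hsz hadm hz hle].
case: n => [|x m] in hsz hadm hz hle *; first by [].
case: hsz => hsz; move/admissible_cons: hadm => hpos.
have hm0 : m != [::].
  by apply/eqP => m0; move: hph; rewrite m0 in hsz; rewrite (size0nil (esym hsz)).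
have hx2 : (x <= 2)%N := hle 0%N isT.
rewrite hjcf_cons // in hz.
have [htail | ] := twos_one_or_region hm0 hsz (fun i => hle i.+1) hsp hpos; last first.
  by rewrite hph => /(region2_sub_inv_neq0 hx2); rewrite hz eqxx.
rewrite htail hjcf_twos_one invr1 in hz.
have -> : x = 1%N by apply/eqP; rewrite -(eqr_nat rat); apply/eqP; lra.
by rewrite htail /one_twos_one subSS subn1 hsz.
Qed.

Theorem lemma2p3 (p q : nat) (a b : seq nat) :
  (1 <= q)%N -> (q < p)%N -> coprime p q ->
  a != [::] -> all (fun x => 5 <= x)%N a ->
  (p%:R / q%:R : rat) = hjcf a ->
  b != [::] -> all (fun x => 2 <= x)%N b ->
  (p%:R / (p - q)%:R : rat) = hjcf b ->
  forall n : seq nat, Zset b n <-> n = one_twos_one (size b).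
Proof.
move=> hq hpq _ ha0 ha5 hpa hb0 hb2 hpb n.
have ha2 : all (fun x => 2 <= x)%N a by apply: sub_all ha5 => x hx; apply: leq_trans hx.
have [r [hD hr hsp]] := dual_shape ha0 ha5.
have -> : b = dual a.
  apply: hjcf_inj hb0 _ hb2 (all_dual_ge2 a) _; first by rewrite hD.
  have [_ ->] := hjcf_dual ha0 ha2; rewrite -hpa -hpb (natrB _ (ltnW hpq)).
  have hq0 : (0 : rat) < q%:R by rewrite ltr0n.
  have hqp : (q%:R : rat) < p%:R by rewrite ltr_nat.
  by field; neq0_lra.
rewrite hD; split=> [|->]; first exact: Zset_eq_one_twos_one (phase_twos hr) hsp.
by apply: one_twos_one_in_Zset; rewrite // -hD all_dual_ge2.
Qed.
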